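(* Let $(V,\varphi,\xi,\eta,g)$ be as in the context and let $\mathcal{F}$ be the space of tensors defined there. The operators $p_1,p_2,p_3,p_4:\mathcal{F}\to\mathcal{F}$ satisfy: (i) $p_i\circ p_i=p_i$ for $i=1,2,3,4$; (ii) $p_1+p_2+p_3+p_4=\mathrm{id}$; (iii) $p_i\circ p_j=0$ for $i\neq j$. Moreover each $p_i$ commutes with the action of the group $G$, i.e. $p_i(\lambda(a)F)=\lambda(a)(p_iF)$ for all $a\in G$, $F\in\mathcal{F}$.
   Context: Let $V$ be a real vector space of dimension $2n+1$ with an endomorphism $\varphi$, a vector $\xi$ and a linear form $\eta$ such that $\varphi\xi=0$, $\eta\circ\varphi=0$, $\eta(\xi)=1$, $\varphi^2=\mathrm{id}-\eta\otimes\xi$, and such that $\varphi$ restricted to $\mathbb{D}=\ker\eta$ has eigenvalues $\pm1$ with eigenspaces of equal dimension $n$. Let $g$ be a nondegenerate symmetric bilinear form (pseudo-Euclidean metric) on $V$ with $g(\varphi X,\varphi Y)=-g(X,Y)+\eta(X)\eta(Y)$; then $\eta(X)=g(X,\xi)$. Write $hX=X-\eta(X)\xi\in\mathbb{D}$. Fix a basis $\{e_1,\dots,e_{2n}\}$ of $\mathbb{D}$ and write $Y=Y^ie_i+\eta(Y)\xi$ (summation over $i=1,\dots,2n$). Let $\mathcal{F}$ be the vector space of all $(0,3)$-tensors $F$ on $V$ of the form $F(X,Y,Z)=Y^ig(\mathcal{A}_{e_i}X,Z)+\eta(Y)g(\mathcal{A}_\xi X,\varphi Z)$, where $\mathcal{A}_{e_i}:V\to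 V$ ($i=1,\dots,2n$) and $\mathcal{A}_\xi:V\to\mathbb{D}$ are linear maps satisfying, for all $X\in V$ and all $i,j$: $g(\mathcal{A}_{e_i}X,e_j)=-g(\mathcal{A}_{e_j}X,e_i)$; $\mathcal{A}_{\varphi e_i}X=-\varphi(\mathcal{A}_{e_i}X)-g(\mathcal{A}_\xi X,e_i)\xi$ (with $\mathcal{A}_{\varphi e_i}$ defined by linearity in the index); $\eta(\mathcal{A}_{e_i}X)=-g(\mathcal{A}_\xi X,\varphi e_i)$; $\eta(\mathcal{A}_\xi X)=0$. Let $G$ be the group of linear automorphisms $a$ of $V$ with $a\varphi=\varphi a$, $a\xi=\xi$, $\eta\circ a=\eta$, $g(aX,aY)=g(X,Y)$ (the structure group $\mathbb{U}(n,\mathbb{R})\times\mathrm{Id}$), acting on $\mathcal{F}$ by $(\lambda(a)F)(X,Y,Z)=F(a^{-1}X,a^{-1}Y,a^{-1}Z)$. Define $p_1(F)(X,Y,Z)=F(hX,hY,hZ)$; $p_2(F)(X,Y,Z)=-\eta(Y)F(hX,hZ,\xi)+\eta(Z)F(hX,hY,\xi)$; $p_3(F)(X,Y,Z)=\eta(X)F(\xi,hY,hZ)$; $p_4(F)(X,Y,Z)=\eta(X)\eta(Y)F(\xi,\xi,hZ)-\eta(X)\eta(Z)F(\xi,\xi,hY)$. *)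

From HB Require Import structures.
From mathcomp Require Import all_boot all_order all_algebra.
From mathcomp Require Import vector reals.
Set Implicit Arguments. Unset Strict Implicit. Unset Printing Implicit Defensive.
Import Order.TTheory GRing.Theory Num.Theory.
Local Open Scope ring_scope.

Definition tensor (R : realType) (V : vectType R) := V -> V -> V -> R.

Definition hproj (R : realType) (V : vectType R) (xi : V) (eta : 'Hom(V, R^o))
  (X : V) : V := X - (eta X : R) *: xi.

(* almost paracontact-type structure (phi, xi, eta) on V with dim V = 2n+1,
   phi|_D having eigenvalues +-1 with n-dimensional eigenspaces, D = ker eta *)
Definition structure_ok (R : realType) (V : vectType R) (n : nat)
  (phi : 'End(V)) (xi : V) (eta : 'Hom(V, R^o)) : Prop :=
  [/\ \dim {:V} = n.*2.+1,
      phi xi = 0,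
      (forall X, eta (phi X) = 0 :> R),
      eta xi = 1 :> R &
      (forall X, phi (phi X) = X - (eta X : R) *: xi)] /\
  (\dim (passmx.leigenspace phi 1 :&: lker eta)%VS = n /\
   \dim (passmx.leigenspace phi (-1) :&: lker eta)%VS = n).

Definition metric_ok (R : realType) (V : vectType R)
  (phi : 'End(V)) (eta : 'Hom(V, R^o)) (g : V -> V -> R) : Prop :=
  [/\ (forall (a : R) x y z, g (a *: x + y) z = a * g x z + g y z),
      (forall x y, g x y = g y x),
      (forall x, (forall y, g x y = 0) -> x = 0) &
      (forall X Y, g (phi X) (phi Y) = - g X Y + (eta X : R) * (eta Y : R))].

(* The space F: tensors of the form
   F(X,Y,Z) = Y^i g(A_{e_i} X, Z) + eta(Y) g(A_xi X, phi Z),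
   where Y = Y^i e_i + eta(Y) xi, i.e. Y^i = coord e i (h Y). *)
Definition inF (R : realType) (V : vectType R) (n : nat)
  (phi : 'End(V)) (xi : V) (eta : 'Hom(V, R^o)) (g : V -> V -> R)
  (e : (n.*2).-tuple V) (F : tensor V) : Prop :=
  exists (A : 'I_(n.*2) -> 'End(V)) (Axi : 'End(V)),
  [/\ (forall X, Axi X \in lker eta),
      (forall X (i j : 'I_(n.*2)),
          g (A i X) (tnth e j) = - g (A j X) (tnth e i)),
      (forall X (i : 'I_(n.*2)),
          (* A_{phi e_i} defined by linearity in the index *)
          (\sum_(j < n.*2) coord e j (phi (tnth e i)) *: A j)%R X
            = - phi (A i X) - g (Axi X) (tnth e i) *: xi),
      (forall X (i : 'I_(n.*2)),
          (eta (A i X) : R) = - g (Axi X) (phi (tnth e i))) &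
      (forall X, (eta (Axi X) : R) = 0)] /\
      (forall X Y Z, F X Y Z =
          \sum_(i < n.*2) coord e i (hproj xi eta Y) * g (A i X) Z
          + (eta Y : R) * g (Axi X) (phi Z)).

Section Projs.
Variables (R : realType) (V : vectType R) (xi : V) (eta : 'Hom(V, R^o)).
Local Notation h := (hproj xi eta).
Local Notation et X := (eta X : R).

Definition p1 (F : tensor V) : tensor V := fun X Y Z => F (h X) (h Y) (h Z).
Definition p2 (F : tensor V) : tensor V := fun X Y Z =>
  - et Y * F (h X) (h Z) xi + et Z * F (h X) (h Y) xi.
Definition p3 (F : tensor V) : tensor V := fun X Y Z => et X * F xi (h Y) (h Z).
Definition p4 (F : tensor V) : tensor V := fun X Y Z =>
  et X * et Y * F xi xi (h Z) - et X * et Z * F xi xi (h Y).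

(* p_k, k = 0..3 standing for p_1..p_4 *)
Definition pr (k : 'I_4) : tensor V -> tensor V :=
  match val k with 0 => p1 | 1 => p2 | 2 => p3 | _ => p4 end.
End Projs.

Definition inG (R : realType) (V : vectType R)
  (phi : 'End(V)) (xi : V) (eta : 'Hom(V, R^o)) (g : V -> V -> R)
  (a : 'End(V)) : Prop :=
  [/\ (forall X, a (phi X) = phi (a X)),
      a xi = xi,
      (forall X, eta (a X) = eta X) &
      (forall X Y, g (a X) (a Y) = g X Y)].

(* (lambda(a) F)(X,Y,Z) = F(a^{-1}X, a^{-1}Y, a^{-1}Z), given ainv = a^{-1} *)
Definition lam (R : realType) (V : vectType R) (ainv : 'End(V))
  (F : tensor V) : tensor V := fun X Y Z => F (ainv X) (ainv Y) (ainv Z).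

From HB Require Import structures.
From mathcomp Require Import all_boot all_order all_algebra.
From mathcomp Require Import vector reals ring lra.
Set Implicit Arguments.
Unset Strict Implicit.
Unset Printing Implicit Defensive.
Import Order.TTheory GRing.Theory Num.Theory.
Local Open Scope ring_scope.

(* Each p_k keeps one block of F with respect to the splitting V = D (+) R xi
   of its three arguments, where h is the projection onto D.  Because h is
   idempotent, kills xi and eta o h = 0, the p_k are complementary projections
   on trilinear tensors, except that the blocks with xi in the second and in
   the third slot must be paired: for F in the space this works because
   eta (A_{e_i} X) = - g (A_xi X, phi e_i) forces F (X, W, xi) = - F (X, xi, W).
   Every a in G fixes xi and preserves eta, hence commutes with h and with the
   p_k.  Finally each p_k F is again of the required form, with explicit
   representing maps built from A and A_xi. *)

Section LinfunLinear.
Variables (K : fieldType) (aT rT : vectType K) (f : aT -> rT).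
Hypothesis f_linear : linear f.

Local Definition lin_f := f.
HB.instance Definition _ := GRing.isLinear.Build K aT rT *:%R lin_f f_linear.

Lemma linfun_linearE x : linfun f x = f x.
Proof. exact: (lfunE lin_f). Qed.

End LinfunLinear.

Section Projections.
Variables (R : realType) (V : vectType R) (xi : V) (eta : 'Hom(V, R^o)).
Local Notation h := (hproj xi eta).
Local Notation et X := (eta X : R).

Lemma etaP a x y : et (a *: x + y) = a * et x + et y.
Proof. by rewrite linearP. Qed.

Lemma etaZ a x : et (a *: x) = a * et x.
Proof. by rewrite linearZ. Qed.

Lemma hproj_linear : linear h.
Proof.
move=> a x y; rewrite /hproj etaP scalerDl -scalerA scalerBr.
by rewrite addrACA opprD.
Qed.

Lemma hproj_decomp X : X = et X *: xi + h X.
Proof. by rewrite /hproj addrC subrK. Qed.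

Lemma hproj_comm (ainv : 'End(V)) :
  ainv xi = xi -> (forall X, et (ainv X) = et X) ->
  forall X, ainv (h X) = h (ainv X).
Proof.
by move=> ainv_xi eta_ainv X; rewrite /hproj linearB linearZ /= ainv_xi eta_ainv.
Qed.

Hypothesis eta_xi : et xi = 1.

Lemma eta_hproj X : et (h X) = 0.
Proof. by rewrite /hproj linearB linearZ /= eta_xi [_ *: _]mulr1 subrr. Qed.

Lemma hproj_idem X : h (h X) = h X.
Proof. by rewrite {1}/hproj eta_hproj scale0r subr0. Qed.

Lemma hproj_xi : h xi = 0.
Proof. by rewrite /hproj eta_xi scale1r subrr. Qed.

Definition trilinear (F : tensor V) : Prop :=
  [/\ forall a x y Y Z, F (a *: x + y) Y Z = a * F x Y Z + F y Y Z,
      forall a x y X Z, F X (a *: x + y) Z = a * F X x Z + F X y Z &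
      forall a x y X Y, F X Y (a *: x + y) = a * F X Y x + F X Y y].

Section Trilinear.
Variable F : tensor V.
Hypothesis F_trilinear : trilinear F.

Lemma trilinear0l Y Z : F 0 Y Z = 0.
Proof.
by case: F_trilinear => + _ _ => /(_ 1 0 0 Y Z); rewrite scale1r mul1r addr0; lra.
Qed.

Lemma trilinear0m X Z : F X 0 Z = 0.
Proof.
by case: F_trilinear => _ + _ => /(_ 1 0 0 X Z); rewrite scale1r mul1r addr0; lra.
Qed.

Lemma trilinear0r X Y : F X Y 0 = 0.
Proof.
by case: F_trilinear => _ _ /(_ 1 0 0 X Y); rewrite scale1r mul1r addr0; lra.
Qed.

Lemma pr_idem k X Y Z : pr xi eta k (pr xi eta k F) X Y Z = pr xi eta k F X Y Z.
Proof.
case: k => -[|[|[|[|//]]]] ?; rewrite /pr /= /p1 /p2 /p3 /p4;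
by rewrite ?hproj_idem ?eta_hproj ?hproj_xi ?eta_xi
  ?trilinear0l ?trilinear0m ?trilinear0r; ring.
Qed.

Lemma pr_orth k l X Y Z : k != l -> pr xi eta k (pr xi eta l F) X Y Z = 0.
Proof.
case: k => -[|[|[|[|//]]]] ?; case: l => -[|[|[|[|//]]]] ? //= _;
rewrite /pr /= /p1 /p2 /p3 /p4;
by rewrite ?hproj_idem ?eta_hproj ?hproj_xi ?eta_xi
  ?trilinear0l ?trilinear0m ?trilinear0r; ring.
Qed.

(* Of the eight blocks of F, skew-symmetry pairs the two mixed [xi]-blocks in
   p2 and in p4 and kills [F _ xi xi]. *)
Lemma sum_pr (xi_skew : forall X W, F X W xi = - F X xi W) X Y Z :
  p1 xi eta F X Y Z + p2 xi eta F X Y Z + p3 xi eta F X Y Z + p4 xi eta F X Y Z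
  = F X Y Z.
Proof.
have [FX FY FZ] := F_trilinear.
have Fxixi W : F W xi xi = 0 by have := xi_skew W xi; lra.
rewrite /p1 /p2 /p3 /p4 [in RHS](hproj_decomp X) FX.
rewrite [in RHS](hproj_decomp Y) !FY [in RHS](hproj_decomp Z) !FZ.
by rewrite !Fxixi !(xi_skew _ (h _)); ring.
Qed.

End Trilinear.

Lemma pr_lam (ainv : 'End(V)) :
  ainv xi = xi -> (forall X, et (ainv X) = et X) ->
  forall k F X Y Z, pr xi eta k (lam ainv F) X Y Z = lam ainv (pr xi eta k F) X Y Z.
Proof.
move=> ainv_xi eta_ainv k F X Y Z.
case: k => -[|[|[|[|//]]]] ?; rewrite /pr /= /lam /p1 /p2 /p3 /p4 /=;
by rewrite ?(hproj_comm ainv_xi eta_ainv) ?eta_ainv ?ainv_xi.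
Qed.

End Projections.

Section TensorSpace.
Variables (R : realType) (V : vectType R) (n : nat) (phi : 'End(V)) (xi : V)
  (eta : 'Hom(V, R^o)) (g : V -> V -> R) (e : (n.*2).-tuple V).
Hypotheses (phi_xi : phi xi = 0) (eta_phi : forall X, eta (phi X) = 0 :> R)
  (eta_xi : eta xi = 1 :> R)
  (phi2 : forall X, phi (phi X) = X - (eta X : R) *: xi).
Hypotheses (g_linear : forall (a : R) x y z, g (a *: x + y) z = a * g x z + g y z)
  (g_sym : forall x y, g x y = g y x)
  (g_phi : forall X Y, g (phi X) (phi Y) = - g X Y + (eta X : R) * (eta Y : R)).
Hypothesis e_basis : basis_of (lker eta) e.

Local Notation h := (hproj xi eta).
Local Notation inF := (inF phi xi eta g e).

Lemma g0l z : g 0 z = 0.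
Proof. by have := g_linear 1 0 0 z; rewrite scale1r mul1r addr0; lra. Qed.

Lemma gZl a x z : g (a *: x) z = a * g x z.
Proof. by have := g_linear a x 0 z; rewrite addr0 g0l addr0. Qed.

Lemma gDl x y z : g (x + y) z = g x z + g y z.
Proof. by have := g_linear 1 x y z; rewrite scale1r mul1r. Qed.

Lemma gBl x y z : g (x - y) z = g x z - g y z.
Proof. by rewrite gDl -scaleN1r gZl mulN1r. Qed.

Lemma g0r z : g z 0 = 0.
Proof. by rewrite g_sym g0l. Qed.

Lemma gZr a x z : g z (a *: x) = a * g z x.
Proof. by rewrite !(g_sym z) gZl. Qed.

Lemma g_sumr m (F : 'I_m -> V) x : g x (\sum_(i < m) F i) = \sum_(i < m) g x (F i).
Proof.
elim: m F => [|m IH] F; first by rewrite !big_ord0 g0r.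
by rewrite !big_ord_recr /= g_sym gDl -IH g_sym (g_sym (F _)).
Qed.

(* From [g (phi X) (phi xi) = 0 = - g X xi + eta X]. *)
Lemma g_xi X : g X xi = eta X.
Proof. by have := g_phi X xi; rewrite phi_xi g0r eta_xi mulr1; lra. Qed.

Lemma g_hproj_l x z : g (h x) z = g x z - (eta x : R) * eta z.
Proof. by rewrite /hproj gBl gZl (g_sym xi) g_xi. Qed.

Lemma g_hproj_r x z : g x (h z) = g x z - (eta x : R) * eta z.
Proof. by rewrite g_sym g_hproj_l g_sym mulrC. Qed.

Lemma g_phi_xi w : g w (phi xi) = 0.
Proof. by rewrite phi_xi g0r. Qed.

Lemma phi_hproj X : phi (h X) = phi X.
Proof. by rewrite /hproj linearB linearZ /= phi_xi scaler0 subr0. Qed.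

Lemma hproj_phi X : h (phi X) = phi X.
Proof. by rewrite /hproj eta_phi scale0r subr0. Qed.

Lemma eta_basis i : (eta (tnth e i) : R) = 0.
Proof. by have /(basis_mem e_basis) := mem_tnth i e; rewrite memv_ker => /eqP. Qed.

Lemma g_phi_coord w v : v \in lker eta ->
  g w (phi v) = \sum_i coord e i v * g w (phi (tnth e i)).
Proof.
case/andP: e_basis => /eqP <- _ /coord_span {1}->.
rewrite linear_sum g_sumr; apply: eq_bigr => i _.
by rewrite linearZ gZr (tnth_nth 0).
Qed.

Lemma g_phi_hproj w X :
  g w (phi X) = \sum_i coord e i (h X) * g w (phi (tnth e i)).
Proof. by rewrite -phi_hproj g_phi_coord // memv_ker eta_hproj. Qed.

Section Representation.
Context {A : 'I_(n.*2) -> 'End(V)} {Axi : 'End(V)} {F : tensor V}.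
Hypothesis eta_A : forall X i, (eta (A i X) : R) = - g (Axi X) (phi (tnth e i)).
Hypothesis F_def : forall X Y Z, F X Y Z =
  \sum_(i < n.*2) coord e i (h Y) * g (A i X) Z + (eta Y : R) * g (Axi X) (phi Z).

Lemma represented_trilinear : trilinear F.
Proof.
split=> a x y *; rewrite !F_def.
- under eq_bigr => i _ do rewrite linearP g_linear mulrDr mulrCA.
  by rewrite big_split /= -mulr_sumr linearP g_linear; ring.
- under eq_bigr => i _ do rewrite hproj_linear linearP mulrDl -mulrA.
  by rewrite big_split /= -mulr_sumr etaP; ring.
- under eq_bigr => i _ do rewrite g_sym g_linear mulrDr mulrCA !(g_sym _ (A i _)).
  by rewrite big_split /= -mulr_sumr linearP g_sym g_linear !(g_sym _ (Axi _)); ring.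
Qed.

Lemma represented_xi_m X Z : F X xi Z = g (Axi X) (phi Z).
Proof.
rewrite F_def hproj_xi // eta_xi mul1r big1 ?add0r // => i _.
by rewrite linear0 mul0r.
Qed.

Lemma represented_xi_r X W : F X W xi = - g (Axi X) (phi W).
Proof.
rewrite F_def g_phi_xi mulr0 addr0 (g_phi_hproj _ W) -sumrN.
by apply: eq_bigr => i _; rewrite g_xi eta_A mulrN.
Qed.

End Representation.

Lemma inF_trilinear F : inF F -> trilinear F.
Proof. by case=> A [Axi [_ F_def]]; exact: represented_trilinear F_def. Qed.

Lemma inF_xi_skew F : inF F -> forall X W, F X W xi = - F X xi W.
Proof.
case=> A [Axi [[_ _ _ eta_A _] F_def]] X W.
by rewrite (represented_xi_r eta_A F_def) (represented_xi_m F_def).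
Qed.

Lemma hproj_lfunE X : linfun h X = h X.
Proof. exact/linfun_linearE/hproj_linear. Qed.

Lemma eta_scale_lfunE (v : V) X :
  linfun (fun Y => (eta Y : R) *: v) X = (eta X : R) *: v.
Proof. by apply: linfun_linearE => a x y; rewrite etaP scalerDl scalerA. Qed.

(* Tensors without [eta]-component in [Y]: take [A_i = h \o B_i] and [A_xi = 0]. *)
Lemma inF_coord_form (B : 'I_(n.*2) -> 'End(V)) (G : tensor V) :
  (forall X i j, g (B i X) (tnth e j) = - g (B j X) (tnth e i)) ->
  (forall X i, exists c : R,
     (\sum_j coord e j (phi (tnth e i)) *: B j) X = - phi (B i X) + c *: xi) ->
  (forall X Y Z, G X Y Z = \sum_i coord e i (h Y) * g (B i X) (h Z)) ->
  inF G.
Proof.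
move=> B_skew B_phi G_def.
exists (fun i => linfun h \o B i)%VF, 0; split; first split.
- by move=> X; rewrite zero_lfunE memv_ker linear0.
- move=> X i j; rewrite !comp_lfunE !hproj_lfunE !g_hproj_l !eta_basis !mulr0 !subr0.
  exact: B_skew.
- move=> X i; have [c B_phi_i] := B_phi X i.
  have -> : (\sum_j coord e j (phi (tnth e i)) *: (linfun h \o B j)%VF) X
      = linfun h ((\sum_j coord e j (phi (tnth e i)) *: B j) X).
    rewrite !sum_lfunE linear_sum; apply: eq_bigr => j _.
    by rewrite !scale_lfunE comp_lfunE linearZ.
  rewrite B_phi_i zero_lfunE g0l scale0r subr0 comp_lfunE linearD linearN linearZ /=.
  by rewrite !hproj_lfunE hproj_xi // hproj_phi scaler0 addr0 phi_hproj.
- by move=> X i; rewrite comp_lfunE hproj_lfunE eta_hproj // zero_lfunE g0l oppr0.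
- by move=> X; rewrite zero_lfunE linear0.
- move=> X Y Z; rewrite G_def zero_lfunE g0l mulr0 addr0; apply: eq_bigr => i _.
  by rewrite comp_lfunE hproj_lfunE g_hproj_l g_hproj_r.
Qed.

(* Tensors built from [eta Y] and [eta Z]: take [A_xi = B] and let
   [A_i X = - g (B X) (phi e_i) xi] carry the [eta]-components forced on the [A_i]. *)
Lemma inF_eta_form (B : 'End(V)) (G : tensor V) :
  (forall X, B X \in lker eta) ->
  (forall X Y Z, G X Y Z =
     (eta Y : R) * g (B X) (phi Z) - (eta Z : R) * g (B X) (phi Y)) ->
  inF G.
Proof.
move=> B_lker G_def.
pose A i := linfun (fun X => - g (B X) (phi (tnth e i)) *: xi).
have AE i X : A i X = - g (B X) (phi (tnth e i)) *: xi.
  apply: linfun_linearE => a x y.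
  by rewrite linearP g_linear opprD scalerDl scalerA mulrN.
exists A, B; split; first split.
- exact: B_lker.
- by move=> X i j; rewrite !AE !gZl !(g_sym xi) !g_xi !eta_basis !mulr0 oppr0.
- move=> X i; rewrite sum_lfunE.
  under eq_bigr => j _ do rewrite scale_lfunE AE scalerA.
  rewrite -scaler_suml AE linearZ /= phi_xi scaler0 oppr0 add0r -scaleNr.
  congr (_ *: _).
  have phi2_e : phi (phi (tnth e i)) = tnth e i.
    by rewrite phi2 eta_basis scale0r subr0.
  rewrite -[in RHS]phi2_e [in RHS]g_phi_coord ?memv_ker ?eta_phi // -sumrN.
  by apply: eq_bigr => j _; rewrite mulrN.
- by move=> X i; rewrite AE etaZ eta_xi mulr1.
- by move=> X; have := B_lker X; rewrite memv_ker => /eqP.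
- move=> X Y Z; rewrite G_def addrC g_phi_hproj mulr_sumr -sumrN; congr (_ + _).
  by apply: eq_bigr => i _; rewrite AE gZl (g_sym xi) g_xi; ring.
Qed.

Lemma inF_pr k F : inF F -> inF (pr xi eta k F).
Proof.
case=> A [Axi [[Axi_lker A_skew A_phi eta_A eta_Axi] F_def]].
have F_xi_r := represented_xi_r eta_A F_def; have F_xi_m := represented_xi_m F_def.
case: k => -[|[|[|[|//]]]] ?; rewrite /pr /=.
- apply: (@inF_coord_form (fun i => A i \o linfun h)%VF).
  + by move=> X i j; rewrite !comp_lfunE; exact: A_skew.
  + move=> X i; exists (- g (Axi (h X)) (tnth e i)).
    have -> : (\sum_j coord e j (phi (tnth e i)) *: (A j \o linfun h)%VF) X
        = (\sum_j coord e j (phi (tnth e i)) *: A j) (linfun h X).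
      by rewrite !sum_lfunE; apply: eq_bigr => j _; rewrite !scale_lfunE comp_lfunE.
    by rewrite A_phi comp_lfunE hproj_lfunE scaleNr.
  + move=> X Y Z; rewrite /p1 F_def hproj_idem // eta_hproj // mul0r addr0.
    by apply: eq_bigr => i _; rewrite comp_lfunE hproj_lfunE.
- apply: (@inF_eta_form (Axi \o linfun h)%VF) => [X | X Y Z].
  + by rewrite comp_lfunE.
  + by rewrite /p2 !F_xi_r !comp_lfunE hproj_lfunE !phi_hproj; ring.
- apply: (@inF_coord_form (fun i => linfun (fun X => (eta X : R) *: A i xi))).
  + by move=> X i j; rewrite !eta_scale_lfunE !gZl A_skew mulrN.
  + move=> X i; exists (- (eta X : R) * g (Axi xi) (tnth e i)).
    have -> : (\sum_j coord e j (phi (tnth e i)) *: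
                linfun (fun X => (eta X : R) *: A j xi)) X
        = (eta X : R) *: (\sum_j coord e j (phi (tnth e i)) *: A j) xi.
      rewrite !sum_lfunE scaler_sumr; apply: eq_bigr => j _.
      by rewrite !scale_lfunE eta_scale_lfunE !scalerA mulrC.
    rewrite A_phi eta_scale_lfunE [phi (_ *: _)]linearZ /= scalerDr !scalerN.
    by rewrite scalerA mulNr scaleNr.
  + move=> X Y Z; rewrite /p3 F_def hproj_idem // eta_hproj // mul0r addr0 mulr_sumr.
    by apply: eq_bigr => i _; rewrite eta_scale_lfunE gZl g_hproj_r; ring.
- apply: (@inF_eta_form (linfun (fun X => (eta X : R) *: Axi xi))) => [X | X Y Z].
  + by rewrite eta_scale_lfunE memv_ker etaZ eta_Axi mulr0.
  + by rewrite /p4 !F_xi_m !eta_scale_lfunE !gZl !phi_hproj; ring.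
Qed.

End TensorSpace.

Theorem lemma2p1 (R : realType) (V : vectType R) (n : nat)
  (phi : 'End(V)) (xi : V) (eta : 'Hom(V, R^o)) (g : V -> V -> R)
  (e : (n.*2).-tuple V) :
  structure_ok n phi xi eta ->
  metric_ok phi eta g ->
  basis_of (lker eta) e ->
  [/\ (forall (k : 'I_4) F, inF phi xi eta g e F ->
         inF phi xi eta g e (pr xi eta k F)),
      (forall (k : 'I_4) F, inF phi xi eta g e F -> forall X Y Z,
         pr xi eta k (pr xi eta k F) X Y Z = pr xi eta k F X Y Z),
      (forall F, inF phi xi eta g e F -> forall X Y Z,
         p1 xi eta F X Y Z + p2 xi eta F X Y Z + p3 xi eta F X Y Z
           + p4 xi eta F X Y Z = F X Y Z),
      (forall (k l : 'I_4) F, k != l -> inF phi xi eta g e F ->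
         forall X Y Z, pr xi eta k (pr xi eta l F) X Y Z = 0) &
      (forall (a ainv : 'End(V)),
         (forall X, a (ainv X) = X) -> (forall X, ainv (a X) = X) ->
         inG phi xi eta g a ->
         forall (k : 'I_4) F, inF phi xi eta g e F -> forall X Y Z,
           pr xi eta k (lam ainv F) X Y Z = lam ainv (pr xi eta k F) X Y Z)].
Proof.
move=> [[_ phi_xi eta_phi eta_xi phi2] _] [g_linear g_sym _ g_phi] e_basis.
have F_trilinear := inF_trilinear g_linear g_sym.
split.
- by move=> k F; apply: inF_pr.
- by move=> k F /F_trilinear F_tri X Y Z; apply: pr_idem.
- move=> F F_in; apply: sum_pr; first exact: F_trilinear F_in.
  exact: inF_xi_skew F_in.
- by move=> k l F kl /F_trilinear F_tri X Y Z; apply: pr_orth.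
- move=> a ainv a_ainv ainv_a [_ a_xi eta_a _] k F _ X Y Z; apply: pr_lam.
  + by rewrite -{1}a_xi ainv_a.
  + by move=> W; rewrite -{2}(a_ainv W) eta_a.
Qed.
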